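(* Let $q>0$, $q\neq1$, let $x(s)=c_1q^{s}+c_2q^{-s}+c_3$ with $q^\mu=c_1/c_2$, let $\tilde\sigma,\tilde\tau$ be polynomials of degrees at most $2$ and $1$ with $\tilde\tau(x)=\tilde\tau' x+\tilde\tau(0)$, $\tilde\sigma(x)=\tfrac{\tilde\sigma''}{2}x^2+\tilde\sigma'(0)x+\tilde\sigma(0)$, and set $\sigma(s)=\tilde\sigma(x(s))-\tfrac12\tilde\tau(x(s))\Delta x(s-\tfrac12)$, $\tau(s)=\tilde\tau(x(s))$. Let $P_n(s;q)$ be polynomial (in $x(s)$) solutions of degree $n$ of $$\sigma(s)\frac{\Delta}{\Delta x(s-\frac12)}\left[\frac{\nabla y(s)}{\nabla x(s)}\right]+\tau(s)\frac{\Delta y(s)}{\Delta x(s)}+\lambda y(s)=0$$ with $\lambda=\lambda_n$, where $\lambda_n=C_1q^n+C_2q^{-n}+C_3$ with $C_1=\frac{1}{2(1-q)}\big(\tilde\tau'+\tilde\sigma''/k_q\big)$, $C_2=\frac{1}{2(1-q^{-1})}\big(\tilde\tau'-\tilde\sigma''/k_q\big)$, $C_3=-\frac{\tilde\sigma''(1+q)}{2k_q(1-q)}-\frac{\tilde\tau'}{2}$. Let $\Phi_n(s;q)=d_n^{-1}A(s)\sqrt{\rho(s)}P_n(s;q)$ (with $\rho$, $d_n$, $A$ as in the context), so that $\mathfrak H(s;q)\Phi_n(s;q)=\lambda_n\Phi_n(s;q)$, where $\mathfrak H(s;q)=\frac{1}{\nabla x_1(s)}A(s)H(s;q)\frac1{A(s)}$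 and $$H(s;q)=-\frac{\sqrt{\sigma(-s-\mu+1)\sigma(s)}}{\nabla x(s)}e^{-\partial_s}-\frac{\sqrt{\sigma(-s-\mu)\sigma(s+1)}}{\Delta x(s)}e^{\partial_s}+\left(\frac{\sigma(-s-\mu)}{\Delta x(s)}+\frac{\sigma(s)}{\nabla x(s)}\right)I.$$ Suppose that there exist operators $a(s;q)$, $b(s;q)$ and constants $\varsigma$ and $\Lambda\neq0$ such that $\mathfrak H(s;q)=b(s;q)a(s;q)$ and $a(s;q)b(s;q)-\varsigma\, b(s;q)a(s;q)=\Lambda I$. Then the eigenvalues $\lambda_n$ are $q$-linear or $q^{-1}$-linear functions of $n$, i.e. $\lambda_n=C_1q^n+C_3$ for all $n$ or $\lambda_n=C_2q^{-n}+C_3$ for all $n$.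
   Context: Notation: $\Delta f(s)=f(s+1)-f(s)$, $\nabla f(s)=f(s)-f(s-1)$; $x_1(s):=x(s+\tfrac12)$; $k_q=q^{1/2}-q^{-1/2}$; $e^{\beta\partial_s}f(s)=f(s+\beta)$; functions in operator products act by multiplication; $I$ is the identity. For a $q$-linear lattice ($c_1=0$ or $c_2=0$), $\sigma(-s-\mu)$ is read as $\sigma(s)+\tau(s)\Delta x(s-\tfrac12)$ (and $\sigma(-s-\mu+1)$ accordingly with $s$ replaced by $s-1$). $\rho(s)$ is a solution of the Pearson-type equation $\frac{\Delta}{\Delta x(s-1/2)}[\sigma(s)\rho(s)]=\tau(s)\rho(s)$, $d_n$ is the norm of $P_n$ with respect to the associated orthogonality, and $A(s)$ is an arbitrary continuous function non-vanishing on the orthogonality interval. *)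

From HB Require Import structures.
From mathcomp Require Import all_boot all_order all_algebra.
From mathcomp Require Import all_classical all_reals all_analysis.
Set Implicit Arguments. Unset Strict Implicit. Unset Printing Implicit Defensive.
Import Order.TTheory GRing.Theory Num.Theory numFieldNormedType.Exports.
Local Open Scope ring_scope.

Section Defs.
Context {R : realType}.

Definition Delta (f : R -> R) (s : R) : R := f (s + 1) - f s.
Definition Nabla (f : R -> R) (s : R) : R := f s - f (s - 1).

Definition xl (q c1 c2 c3 : R) (s : R) : R := c1 * q `^ s + c2 * q `^ (- s) + c3.

Definition x1l (q c1 c2 c3 : R) (s : R) : R := xl q c1 c2 c3 (s + 2^-1).

Definition kq (q : R) : R := Num.sqrt q - (Num.sqrt q)^-1.

Definition sigt (s2 s1 s0 : R) (x : R) : R := s2 / 2 * x ^+ 2 + s1 * x + s0.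
Definition taut (t1 t0 : R) (x : R) : R := t1 * x + t0.

Section Lattice.
Variables (q c1 c2 c3 mu s2 s1 s0 t1 t0 : R).
Let x := xl q c1 c2 c3.

Definition sigmaL (s : R) : R :=
  sigt s2 s1 s0 (x s) - 2^-1 * taut t1 t0 (x s) * Delta x (s - 2^-1).
Definition tauL (s : R) : R := taut t1 t0 (x s).

(* sigma(-s-mu); on a q-linear lattice (c1 = 0 or c2 = 0) read as
   sigma(s) + tau(s) Delta x(s - 1/2), as prescribed by the context. *)
Definition sigmaRefl (s : R) : R :=
  if (c1 != 0) && (c2 != 0) then sigmaL (- s - mu)
  else sigmaL s + tauL s * Delta x (s - 2^-1).

Definition Hop (f : R -> R) (s : R) : R :=
  - (Num.sqrt (sigmaRefl (s - 1) * sigmaL s) / Nabla x s) * f (s - 1)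
  - (Num.sqrt (sigmaRefl s * sigmaL (s + 1)) / Delta x s) * f (s + 1)
  + (sigmaRefl s / Delta x s + sigmaL s / Nabla x s) * f s.

Definition Hfrak (A : R -> R) (f : R -> R) (s : R) : R :=
  (Nabla (x1l q c1 c2 c3) s)^-1 * (A s * Hop (fun t => f t / A t) s).

Definition DEop (y : R -> R) (lam : R) (s : R) : R :=
  sigmaL s * (Delta (fun t => Nabla y t / Nabla x t) s / Delta x (s - 2^-1))
  + tauL s * (Delta y s / Delta x s) + lam * y s.

Definition C1 : R := (2 * (1 - q))^-1 * (t1 + s2 / kq q).
Definition C2 : R := (2 * (1 - q^-1))^-1 * (t1 - s2 / kq q).
Definition C3 : R := - (s2 * (1 + q)) / (2 * kq q * (1 - q)) - t1 / 2.
Definition lambda (n : nat) : R := C1 * q ^+ n + C2 * q ^- n + C3.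

End Lattice.

Definition PhiF (d : nat -> R) (A rho : R -> R) (P : nat -> R -> R) (n : nat) (s : R) : R :=
  (d n)^-1 * A s * Num.sqrt (rho s) * P n s.

Definition eqOn (D : set R) (f g : R -> R) : Prop := forall s, D s -> f s = g s.

Definition inSpan (D : set R) (Phi : nat -> R -> R) (f : R -> R) : Prop :=
  exists (N : nat) (c : nat -> R), eqOn D f (fun s => \sum_(i < N) c i * Phi i s).

Definition linOnSpan (D : set R) (Phi : nat -> R -> R) (T : (R -> R) -> (R -> R)) : Prop :=
  [/\ forall f g, inSpan D Phi f -> eqOn D f g -> eqOn D (T f) (T g),
      forall f, inSpan D Phi f -> inSpan D Phi (T f) &
      forall (k : R) f g, inSpan D Phi f -> inSpan D Phi g ->
        eqOn D (T (fun s => k * f s + g s)) (fun s => k * T f s + T g s)].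

End Defs.

From HB Require Import structures.
From mathcomp Require Import all_boot all_order all_algebra.
From mathcomp Require Import all_classical all_reals all_analysis.
Import Order.TTheory GRing.Theory Num.Theory numFieldNormedType.Exports.
From mathcomp Require Import ring lra.
Set Implicit Arguments. Unset Strict Implicit. Unset Printing Implicit Defensive.
Local Open Scope ring_scope.

(* Since frak H = b a, each Phi_n is an eigenvector of b a for lambda_n, and
   a b - vsig b a = Lam makes a a ladder operator: vsig (b a) acts on a Phi_n
   as lambda_n - Lam.  Expanding a Phi_n = sum_i c_i Phi_i and iterating gives
   sum_i c_i (vsig lambda_i - lambda_n + Lam)^(k+1) Phi_i = 0 for every k,
   which forces a Phi_n = 0, hence lambda_n = 0, unless
   lambda_n - Lam = vsig lambda_m for some m (no linear independence of the
   Phi_n is needed).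
   If C1 and C2 were both nonzero, lambda_n = C1 q^n + C2 q^-n + C3 would grow
   geometrically, so for large n the ladder relation gives vsig q^m = q^n + O(1);
   since the powers of q are discrete this pins m - n to a constant, and the
   relation becomes an identity alpha t + beta / t = const at the three points
   t = q^N, q^(N+1), q^(N+2).  All its coefficients vanish, which forces
   vsig = 1 and Lam = 0. *)

Lemma sum_eq0_of_power_sums_eq0 (R : idomainType) (N : nat) (x e : nat -> R) :
  (forall i, e i != 0) -> (forall k, \sum_(i < N) x i * e i ^+ k.+1 = 0) ->
  \sum_(i < N) x i = 0.
Proof.
elim: N x => [|N IH] x e_neq0 sums0; first by rewrite big_ord0.
set el := e N.
(* Subtracting [el] times the k-th sum from the (k+1)-th one kills index [N]. *)
have shifted0 : \sum_(i < N) x i * (e i - el) = 0.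
  apply: (IH (fun i => x i * (e i - el))) => // k.
  have := sums0 k.+1; have := sums0 k; rewrite !big_ord_recr /= => hk hk1.
  have -> : \sum_(i < N) x i * (e i - el) * e i ^+ k.+1 =
      \sum_(i < N) x i * e i ^+ k.+2 - el * \sum_(i < N) x i * e i ^+ k.+1.
    by rewrite mulr_sumr -sumrB; apply: eq_bigr => i _; rewrite !exprS; ring.
  have -> : \sum_(i < N) x i * e i ^+ k.+2 - el * \sum_(i < N) x i * e i ^+ k.+1
      = (\sum_(i < N) x i * e i ^+ k.+2 + x N * e N ^+ k.+2)
        - el * (\sum_(i < N) x i * e i ^+ k.+1 + x N * e N ^+ k.+1).
    by rewrite /el !exprS; ring.
  by rewrite hk hk1; ring.
have sum_e : \sum_(i < N) x i * e i = el * \sum_(i < N) x i.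
  apply/eqP; rewrite -subr_eq0 mulr_sumr -sumrB; apply/eqP.
  by rewrite -[RHS]shifted0; apply: eq_bigr => i _; ring.
have := sums0 0%N; rewrite big_ord_recr /= !expr1 sum_e -/el.
rewrite [x N * el]mulrC -mulrDr => /eqP.
by rewrite mulf_eq0 (negbTE (e_neq0 N)) /= big_ord_recr => /eqP.
Qed.

Lemma laurent_three_roots_eq0 (R : fieldType) (A B K u v w : R) :
  u != 0 -> v != 0 -> w != 0 -> u != v -> u != w -> v != w ->
  A * u + B / u = K -> A * v + B / v = K -> A * w + B / w = K ->
  [/\ A = 0, B = 0 & K = 0].
Proof.
move=> u0 v0 w0 uv uw vw eu ev ew.
have quad t : t != 0 -> A * t + B / t = K -> A * t ^+ 2 + B = K * t.
  by move=> t0 <-; field.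
have sum_root t t' : t != 0 -> t' != 0 -> t != t' ->
    A * t + B / t = K -> A * t' + B / t' = K -> A * (t + t') = K.
  move=> t0 t'0 tt' et et'.
  have : (t - t') * (A * (t + t') - K) = 0.
    have -> : (t - t') * (A * (t + t') - K) =
        (A * t ^+ 2 + B - K * t) - (A * t' ^+ 2 + B - K * t') by ring.
    by rewrite (quad t t0 et) (quad t' t'0 et'); ring.
  by move/eqP; rewrite mulf_eq0 subr_eq0 (negbTE tt') subr_eq0 => /eqP.
have Auv := sum_root u v u0 v0 uv eu ev.
have Auw := sum_root u w u0 w0 uw eu ew.
have A0 : A = 0.
  apply/eqP; have : A * (v - w) = 0.
    by rewrite mulrBr -(subrr K) -{1}Auv -Auw; ring.
  by move/eqP; rewrite mulf_eq0 subr_eq0 (negbTE vw) orbF.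
have K0 : K = 0 by rewrite -Auv A0 mul0r.
by split=> //; move: (quad u u0 eu); rewrite A0 K0 !mul0r add0r.
Qed.

Lemma ladder_laurent_identity (R : fieldType) (al be ga vs La r t s : R) :
  t != 0 -> vs != 0 -> r != 0 -> vs * s = r * t ->
  al * t + be / t + ga - La = vs * (al * s + be / s + ga) ->
  al * (1 - r) * t + be * (1 - vs ^+ 2 / r) / t = vs * ga - ga + La.
Proof.
move=> t0 vs0 r0 vs_s; have -> : s = r * t / vs by rewrite -vs_s; field.
move=> ladder; apply/eqP; rewrite -subr_eq0; apply/eqP.
transitivity (al * t + be / t + ga - La
  - vs * (al * (r * t / vs) + be / (r * t / vs) + ga)).
  by field; rewrite r0 t0 vs0.
by rewrite ladder subrr.
Qed.

Section PowerGrowth.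
Variable R : realType.

Lemma expr_unbounded (Q L : R) : 1 < Q -> exists N : nat, L < Q ^+ N.
Proof.
move=> Q_gt1.
have bernoulli n : 1 + n%:R * (Q - 1) <= Q ^+ n.
  elim: n => [|n IH]; first by rewrite mul0r addr0 expr0.
  have := exprn_ege1 n (ltW Q_gt1); have := ler0n R n.
  rewrite exprS -natr1; nra.
exists (Num.Def.truncn (L / (Q - 1))).+1; apply: lt_le_trans (bernoulli _).
have := truncnS_gt (L / (Q - 1)); rewrite ltr_pdivrMr; lra.
Qed.

Lemma approx_cross_lt (Q c U x y a b : R) :
  1 < Q -> 0 <= c -> 2 * Q * c < (Q - 1) * U -> U <= x -> U <= y ->
  `|a - x| <= c -> `|b - y| <= c -> b * x < Q * (a * y).
Proof.
move=> Q_gt1 c_ge0 U_big Ux Uy; rewrite !ler_norml => /andP[a1 a2] /andP[b1 b2].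
have U_gt0 : 0 < U by nra.
have bx : b * x <= (y + c) * x by rewrite ler_wpM2r //; lra.
have ay : Q * ((x - c) * y) <= Q * (a * y) by rewrite ler_wpM2l ?ler_wpM2r; lra.
have hx : 0 < x * ((Q - 1) * y - 2 * c) by apply: mulr_gt0; nra.
have hy : 0 < y * ((Q - 1) * x - 2 * Q * c) by apply: mulr_gt0; nra.
nra.
Qed.

Lemma approx_powers_exponents_eq (Q c U vs : R) (m n m' n' : nat) :
  1 < Q -> 0 <= c -> 2 * Q * c < (Q - 1) * U ->
  U <= Q ^+ n -> U <= Q ^+ n' ->
  `|vs * Q ^+ m - Q ^+ n| <= c -> `|vs * Q ^+ m' - Q ^+ n'| <= c ->
  (m + n' = m' + n)%N.
Proof.
move=> Q_gt1 c_ge0 U_big Un Un' approx approx'.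
have vs_gt0 : 0 < vs.
  have : 0 < vs * Q ^+ m by move: approx; rewrite ler_norml => /andP[]; nra.
  by rewrite pmulr_lgt0 // exprn_gt0 // (lt_trans ltr01).
have no_lt k l k' l' : U <= Q ^+ l -> U <= Q ^+ l' ->
    `|vs * Q ^+ k - Q ^+ l| <= c -> `|vs * Q ^+ k' - Q ^+ l'| <= c ->
    ~~ (k + l' < k' + l)%N.
  move=> Ul Ul' ak ak'; apply/negP => lt.
  have := approx_cross_lt Q_gt1 c_ge0 U_big Ul Ul' ak ak'.
  rewrite ltNge => /negP; apply.
  rewrite mulrCA -exprS -!mulrA -!exprD.
  by rewrite ler_pM2l //; apply: ler_weXn2l; [exact: ltW | rewrite addnS].
by case: (ltngtP (m + n') (m' + n)) => // lt;
  [case/negP: (no_lt m n m' n' Un Un' approx approx')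
  | case/negP: (no_lt m' n' m n Un' Un approx' approx)].
Qed.

End PowerGrowth.

Definition qlaurent (R : fieldType) (Q al be ga : R) (n : nat) : R :=
  al * Q ^+ n + be / Q ^+ n + ga.

Section LaurentLadder.
Variables (R : realType) (Q al be ga vs La : R).
Hypotheses (Q_gt1 : 1 < Q) (al_neq0 : al != 0).
Let f := qlaurent Q al be ga.
Let K : R := vs * ga - ga + La.
Let c : R := (`|be| + `|vs| * `|be| + `|K|) / `|al|.

Let al_gt0 : 0 < `|al|. Proof. by rewrite normr_gt0. Qed.
Let c_ge0 : 0 <= c. Proof. by rewrite divr_ge0 // !addr_ge0 // mulr_ge0. Qed.
Let expr_ge1 n : 1 <= Q ^+ n. Proof. exact/exprn_ege1/ltW. Qed.
Let expr_gt0 n : 0 < Q ^+ n. Proof. exact: lt_le_trans ltr01 (expr_ge1 n). Qed.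
Let expr_neq0 n : Q ^+ n != 0. Proof. exact: lt0r_neq0. Qed.
Let expr_addn_neq N i j : (i < j)%N -> Q ^+ (N + i) != Q ^+ (N + j).
Proof. by move=> ij; rewrite lt_eqF // ltr_eXn2l // ltn_add2l. Qed.

Lemma norm_div_expr_le x n : `|x / Q ^+ n| <= `|x|.
Proof.
by rewrite normrM normfV (gtr0_norm (expr_gt0 n)) ler_piMr // invf_le1.
Qed.

Lemma qlaurent_neq0 n : (`|be| + `|ga|) / `|al| < Q ^+ n -> f n != 0.
Proof.
apply: contraTneq => fn0; rewrite -leNgt ler_pdivlMr //.
have -> : Q ^+ n * `|al| = `|al * Q ^+ n|.
  by rewrite normrM (gtr0_norm (expr_gt0 n)) mulrC.
have -> : al * Q ^+ n = - (be / Q ^+ n + ga).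
  by apply/eqP; rewrite -addr_eq0 addrA; apply/eqP.
by rewrite normrN (le_trans (ler_normD _ _)) // lerD2r norm_div_expr_le.
Qed.

Lemma qlaurent_ladder_approx n m :
  f n - La = vs * f m -> `|vs * Q ^+ m - Q ^+ n| <= c.
Proof.
move=> ladder; rewrite ler_pdivlMr // mulrC -normrM.
have -> : al * (vs * Q ^+ m - Q ^+ n) = be / Q ^+ n - vs * (be / Q ^+ m) - K.
  apply/eqP; rewrite -subr_eq0; apply/eqP.
  transitivity (vs * f m - (f n - La)); first by rewrite /f /qlaurent /K; ring.
  by rewrite ladder subrr.
rewrite (le_trans (ler_normB _ _)) // lerD2r (le_trans (ler_normB _ _)) //.
by rewrite lerD ?norm_div_expr_le // normrM ler_wpM2l ?norm_div_expr_le.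
Qed.

Lemma qlaurent_ladder_three_eq0 (N : nat) (m : nat -> nat) :
  be != 0 -> vs != 0 -> 2 * Q * c < (Q - 1) * Q ^+ N ->
  (forall k, (k < 3)%N -> f (N + k) - La = vs * f (m k)) -> La = 0.
Proof.
move=> be_neq0 vs_neq0; set U := Q ^+ N => U_big ladder.
have U_le k : U <= Q ^+ (N + k) by rewrite exprD ler_peMr ?(ltW (expr_gt0 _)).
have U_neq0 : U != 0 := lt0r_neq0 (expr_gt0 N).
set r := vs * Q ^+ m 0%N / U.
(* The exponent gap [m k - (N + k)] is the same for the three points. *)
have gap_const k : (k < 3)%N -> vs * Q ^+ m k = r * Q ^+ (N + k).
  move=> k3; have := approx_powers_exponents_eq Q_gt1 c_ge0 U_big (U_le 0%N)
    (U_le k) (qlaurent_ladder_approx (ladder 0%N isT))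
    (qlaurent_ladder_approx (ladder k k3)).
  move/(congr1 (GRing.exp Q)); rewrite !exprD expr0 mulr1 -/U => gap.
  have -> : Q ^+ m k = Q ^+ m 0%N * Q ^+ k.
    by apply: (mulIf U_neq0); rewrite -gap; ring.
  by rewrite /r; field.
have r_neq0 : r != 0 by rewrite mulf_neq0 ?invr_eq0 // mulf_neq0 // lt0r_neq0.
have line k : (k < 3)%N ->
    al * (1 - r) * Q ^+ (N + k) + be * (1 - vs ^+ 2 / r) / Q ^+ (N + k) = K.
  move=> k3; exact: ladder_laurent_identity (expr_neq0 _) vs_neq0
    r_neq0 (gap_const k k3) (ladder k k3).
have [A0 B0 K0] := laurent_three_roots_eq0 (expr_neq0 _) (expr_neq0 _)
  (expr_neq0 _) (@expr_addn_neq N 0 1 isT) (@expr_addn_neq N 0 2 isT)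
  (@expr_addn_neq N 1 2 isT) (line 0%N isT) (line 1%N isT) (line 2%N isT).
have r1 : r = 1.
  by apply/eqP; move/eqP: A0; rewrite mulf_eq0 (negbTE al_neq0) subr_eq0 eq_sym.
have vs_gt0 : 0 < vs.
  have : 0 < vs * (Q ^+ m 0%N / U) by rewrite mulrA -/r r1.
  by rewrite pmulr_lgt0 // divr_gt0 ?expr_gt0.
have vs1 : vs = 1.
  have : vs ^+ 2 == 1.
    by move/eqP: B0; rewrite mulf_eq0 (negbTE be_neq0) subr_eq0 r1 divr1 eq_sym.
  by rewrite sqrf_eq1 => /orP[/eqP //|/eqP vsN1]; lra.
by move: K0; rewrite /K vs1 mul1r subrr add0r.
Qed.

Lemma qlaurent_not_ladder : be != 0 -> La != 0 ->
  ~ (forall n, f n = 0 \/ exists m, f n - La = vs * f m).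
Proof.
move=> be_neq0 La_neq0 ladder.
pose B : R := (`|be| + `|ga|) / `|al|.
have B_ge0 : 0 <= B by rewrite divr_ge0 // addr_ge0.
have Q1_gt0 : 0 < Q - 1 by rewrite subr_gt0.
have [N UN] := expr_unbounded (B + 2 * Q * c / (Q - 1)) Q_gt1.
have slack_ge0 : 0 <= 2 * Q * c / (Q - 1).
  have Q_ge0 : 0 <= Q := le_trans ler01 (ltW Q_gt1).
  exact: divr_ge0 (mulr_ge0 (mulr_ge0 (ler0n R 2) Q_ge0) c_ge0) (ltW Q1_gt0).
have U_big : 2 * Q * c < (Q - 1) * Q ^+ N.
  by rewrite [_ * Q ^+ N]mulrC -ltr_pdivrMr //; lra.
have step k : exists m, f (N + k) - La = vs * f m.
  have /qlaurent_neq0 : B < Q ^+ (N + k).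
    rewrite exprD (lt_le_trans _ (ler_peMr _ (expr_ge1 k))) ?(ltW (expr_gt0 _)) //.
    lra.
  by case: (ladder (N + k)) => // ->; rewrite eqxx.
have [vs0|vs_neq0] := eqVneq vs 0.
  have line k : al * Q ^+ (N + k) + be / Q ^+ (N + k) = La - ga.
    by have [m] := step k; rewrite vs0 mul0r => /eqP; rewrite subr_eq0 => /eqP <-;
      rewrite /f /qlaurent; ring.
  have [al0 _ _] := laurent_three_roots_eq0 (expr_neq0 _) (expr_neq0 _)
    (expr_neq0 _) (@expr_addn_neq N 0 1 isT) (@expr_addn_neq N 0 2 isT)
    (@expr_addn_neq N 1 2 isT) (line 0%N) (line 1%N) (line 2%N).
  by move/eqP: al_neq0.
have [m hm] := choice step.
move/eqP: La_neq0; apply.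
exact: qlaurent_ladder_three_eq0 be_neq0 vs_neq0 U_big (fun k _ => hm k).
Qed.
End LaurentLadder.

Lemma qlaurentV (R : fieldType) (Q al be ga : R) (n : nat) :
  qlaurent Q^-1 be al ga n = qlaurent Q al be ga n.
Proof. by rewrite /qlaurent exprVn invrK; ring. Qed.

Lemma qlaurent_not_ladder_neq1 (R : realType) (Q al be ga vs La : R) :
  0 < Q -> Q != 1 -> al != 0 -> be != 0 -> La != 0 ->
  ~ (forall n, qlaurent Q al be ga n = 0 \/
       exists m, qlaurent Q al be ga n - La = vs * qlaurent Q al be ga m).
Proof.
move=> Q_gt0; rewrite neq_lt => /orP[Q_lt1|Q_gt1] al_neq0 be_neq0 La_neq0;
  last exact: qlaurent_not_ladder.
rewrite -(funext (qlaurentV Q al be ga)).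
by apply: qlaurent_not_ladder => //; rewrite invf_gt1.
Qed.

Section SpanOperators.
Variables (R : realType) (D : set R) (Phi : nat -> R -> R).

Definition lincomb (N : nat) (c : nat -> R) : R -> R :=
  fun s => \sum_(i < N) c i * Phi i s.

Lemma inSpan_lincomb N c : inSpan D Phi (lincomb N c).
Proof. by exists N, c. Qed.

Lemma inSpan_Phi n : inSpan D Phi (Phi n).
Proof.
exists n.+1, (fun i => (i == n)%:R) => s _.
rewrite big_ord_recr /= eqxx mul1r big1 ?add0r // => i _.
by rewrite (ltn_eqF (ltn_ord i)) mul0r.
Qed.

Lemma inSpan0 : inSpan D Phi (fun _ => 0).
Proof. by exists 0%N, (fun _ => 0) => s _; rewrite big_ord0. Qed.

Section LinearOnSpan.
Variable T : (R -> R) -> (R -> R).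
Hypothesis T_lin : linOnSpan D Phi T.

Lemma linOn_eqOn f g : inSpan D Phi f -> eqOn D f g -> eqOn D (T f) (T g).
Proof. by case: T_lin => h _ _; apply: h. Qed.

Lemma linOn_inSpan f : inSpan D Phi f -> inSpan D Phi (T f).
Proof. by case: T_lin => _ h _; apply: h. Qed.

Lemma linOnP k f g : inSpan D Phi f -> inSpan D Phi g ->
  eqOn D (T (fun s => k * f s + g s)) (fun s => k * T f s + T g s).
Proof. by case: T_lin => _ _ h; apply: h. Qed.

Lemma linOn0 : eqOn D (T (fun _ => 0)) (fun _ => 0).
Proof.
move=> s Ds; have := linOnP 1 inSpan0 inSpan0 Ds.
rewrite (_ : (fun _ => 1 * 0 + 0) = (fun _ => 0)); last first.
  by apply: funext => t; rewrite mul1r addr0.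
by rewrite mul1r => /eqP; rewrite addrC -subr_eq subrr eq_sym => /eqP.
Qed.

Lemma linOn_eqOn0 f :
  inSpan D Phi f -> eqOn D f (fun _ => 0) -> eqOn D (T f) (fun _ => 0).
Proof. by move=> fP f0 s Ds; rewrite (linOn_eqOn fP f0 Ds) linOn0. Qed.

Lemma linOnZ k f :
  inSpan D Phi f -> eqOn D (T (fun s => k * f s)) (fun s => k * T f s).
Proof.
move=> fP s Ds; have := linOnP k fP inSpan0 Ds.
rewrite (_ : (fun s => k * f s + 0) = (fun s => k * f s)); last first.
  by apply: funext => t; rewrite addr0.
by rewrite linOn0 // addr0.
Qed.

End LinearOnSpan.

Variables (a b : (R -> R) -> (R -> R)) (lam : nat -> R) (vs La : R).
Hypotheses (a_lin : linOnSpan D Phi a) (b_lin : linOnSpan D Phi b).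
Hypothesis ba_eigen : forall n, eqOn D (b (a (Phi n))) (fun s => lam n * Phi n s).
Hypothesis ab_ba_comm : forall f, inSpan D Phi f ->
  eqOn D (fun s => a (b f) s - vs * b (a f) s) (fun s => La * f s).
Hypothesis Phi_neq0 : forall n, exists s, D s /\ Phi n s != 0.

Lemma ba_eqOn0 f :
  inSpan D Phi f -> eqOn D f (fun _ => 0) -> eqOn D (b (a f)) (fun _ => 0).
Proof.
move=> fP f0.
exact (linOn_eqOn0 b_lin (linOn_inSpan a_lin fP) (linOn_eqOn0 a_lin fP f0)).
Qed.

Lemma ba_lincomb N c :
  eqOn D (b (a (lincomb N c))) (lincomb N (fun i => c i * lam i)).
Proof.
elim: N => [|N IH] s Ds.
  have lincomb0 d : eqOn D (lincomb 0 d) (fun _ => 0).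
    by move=> t _; rewrite /lincomb big_ord0.
  rewrite [RHS]lincomb0 //; exact (ba_eqOn0 (inSpan_lincomb 0 c) (lincomb0 c) Ds).
have lincombS : eqOn D (lincomb N.+1 c) (fun t => c N * Phi N t + lincomb N c t).
  by move=> t _; rewrite /lincomb big_ord_recr /= addrC.
have a_split : eqOn D (a (lincomb N.+1 c))
    (fun t => c N * a (Phi N) t + a (lincomb N c) t).
  move=> t Dt; rewrite (linOn_eqOn a_lin (inSpan_lincomb _ _) lincombS Dt).
  exact (linOnP a_lin (c N) (inSpan_Phi N) (inSpan_lincomb N c) Dt).
rewrite (linOn_eqOn b_lin (linOn_inSpan a_lin (inSpan_lincomb _ _)) a_split Ds).
rewrite (linOnP b_lin (c N) (linOn_inSpan a_lin (inSpan_Phi N))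
  (linOn_inSpan a_lin (inSpan_lincomb N c)) Ds).
by rewrite ba_eigen // IH // /lincomb big_ord_recr /=; ring.
Qed.

Lemma ba_eigenvalue_ladder n : lam n = 0 \/ exists m, lam n - La = vs * lam m.
Proof.
have aPhiP : inSpan D Phi (a (Phi n)) := linOn_inSpan a_lin (inSpan_Phi n).
have [N [c aPhi]] := aPhiP; rewrite -/(lincomb N c) in aPhi.
have [|no_m] := pselect (exists m, lam n - La = vs * lam m); [by right | left].
pose mu := lam n - La; pose e i := vs * lam i - mu.
have e_neq0 i : e i != 0.
  by apply: contra_notN no_m; rewrite subr_eq0 eq_sym => /eqP; exists i.
have lincombE d s : lincomb N (fun i => d i * e i) s =
    vs * lincomb N (fun i => d i * lam i) s - mu * lincomb N d s.
  by rewrite /lincomb !mulr_sumr -sumrB; apply: eq_bigr => i _; rewrite /e; ring.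
have lowered : eqOn D (lincomb N (fun i => c i * e i)) (fun _ => 0).
  move=> s Ds; rewrite lincombE -(ba_lincomb N c Ds) -(aPhi s Ds).
  rewrite -(linOn_eqOn b_lin (linOn_inSpan a_lin aPhiP)
    (linOn_eqOn a_lin aPhiP aPhi) Ds).
  have := ab_ba_comm aPhiP Ds.
  rewrite (linOn_eqOn a_lin (linOn_inSpan b_lin aPhiP) (ba_eigen n) Ds).
  rewrite (linOnZ a_lin (lam n) (inSpan_Phi n) Ds) => comm.
  by rewrite /mu mulrBl -comm; ring.
have powers k : eqOn D (lincomb N (fun i => c i * e i ^+ k.+1)) (fun _ => 0).
  elim: k => [|k IH] s Ds.
    by rewrite -[RHS](lowered s Ds); apply: eq_bigr => i _; rewrite expr1.
  have -> : lincomb N (fun i => c i * e i ^+ k.+2) s =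
      lincomb N (fun i => c i * e i ^+ k.+1 * e i) s.
    by apply: eq_bigr => i _; rewrite exprS; ring.
  rewrite lincombE IH // -(ba_lincomb N _ Ds) mulr0 subr0.
  by rewrite (ba_eqOn0 (inSpan_lincomb N _) IH Ds) mulr0.
have aPhi0 : eqOn D (a (Phi n)) (fun _ => 0).
  move=> s Ds; rewrite aPhi //.
  apply: (sum_eq0_of_power_sums_eq0 (x := fun i => c i * Phi i s) e_neq0) => k.
  by rewrite -[RHS](powers k s Ds); apply: eq_bigr => i _; ring.
have [s [Ds Phins_neq0]] := Phi_neq0 n.
have := ba_eigen n Ds; rewrite (linOn_eqOn0 b_lin aPhiP aPhi0 Ds) => /esym/eqP.
by rewrite mulf_eq0 (negbTE Phins_neq0) orbF => /eqP.
Qed.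

End SpanOperators.

Theorem theorem3 (R : realType) (q c1 c2 c3 mu s2 s1 s0 t1 t0 : R)
    (D : set R) (A rho : R -> R) (d : nat -> R) (P : nat -> R -> R)
    (a b : (R -> R) -> (R -> R)) (vsig Lam : R) :
  0 < q -> q != 1 ->
  (c1 != 0) || (c2 != 0) ->
  (c1 != 0 -> c2 != 0 -> q `^ mu = c1 / c2) ->
  (* P_n is a polynomial of degree n in x(s) ... *)
  (forall n : nat, exists p : {poly R},
      size p = n.+1 /\ forall s, P n s = p.[xl q c1 c2 c3 s]) ->
  (* ... solving the difference equation with lambda = lambda_n *)
  (forall (n : nat) (s : R),
      Delta (xl q c1 c2 c3) s != 0 -> Nabla (xl q c1 c2 c3) s != 0 ->
      Delta (xl q c1 c2 c3) (s - 2^-1) != 0 ->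
      DEop q c1 c2 c3 s2 s1 s0 t1 t0 (P n) (lambda q s2 t1 n) s = 0) ->
  (* rho solves the Pearson equation *)
  (forall s, Delta (xl q c1 c2 c3) (s - 2^-1) != 0 ->
      Delta (fun t => sigmaL q c1 c2 c3 s2 s1 s0 t1 t0 t * rho t) s
        / Delta (xl q c1 c2 c3) (s - 2^-1)
      = tauL q c1 c2 c3 t1 t0 s * rho s) ->
  (* d_n is a norm, A continuous and non-vanishing on the domain D *)
  (forall n, 0 < d n) ->
  continuous A -> (forall s, D s -> A s != 0) ->
  (* frak H Phi_n = lambda_n Phi_n, Phi_n nonzero *)
  (forall n, eqOn D (Hfrak q c1 c2 c3 mu s2 s1 s0 t1 t0 A (PhiF d A rho P n))
                    (fun s => lambda q s2 t1 n * PhiF d A rho P n s)) ->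
  (forall n, exists s, D s /\ PhiF d A rho P n s != 0) ->
  (* a, b operators with frak H = b a and a b - vsig b a = Lam I *)
  linOnSpan D (PhiF d A rho P) a -> linOnSpan D (PhiF d A rho P) b ->
  (forall f, inSpan D (PhiF d A rho P) f ->
      eqOn D (Hfrak q c1 c2 c3 mu s2 s1 s0 t1 t0 A f) (b (a f))) ->
  (forall f, inSpan D (PhiF d A rho P) f ->
      eqOn D (fun s => a (b f) s - vsig * b (a f) s) (fun s => Lam * f s)) ->
  Lam != 0 ->
  (forall n : nat, lambda q s2 t1 n = C1 q s2 t1 * q ^+ n + C3 q s2 t1) \/
  (forall n : nat, lambda q s2 t1 n = C2 q s2 t1 * q ^- n + C3 q s2 t1).
Proof.
move=> q_gt0 q_neq1 _ _ _ _ _ _ _ _ Hfrak_eigen Phi_neq0 a_lin b_lin Hfrak_ba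
  comm Lam_neq0.
have ba_eigen n : eqOn D (b (a (PhiF d A rho P n)))
    (fun s => lambda q s2 t1 n * PhiF d A rho P n s).
  by move=> s Ds; rewrite -(Hfrak_ba _ (inSpan_Phi D _ n) s Ds); apply: Hfrak_eigen.
have ladder := ba_eigenvalue_ladder a_lin b_lin ba_eigen comm Phi_neq0.
have [C2_0|C2_neq0] := eqVneq (C2 q s2 t1) 0.
  by left => n; rewrite /lambda C2_0 mul0r addr0.
have [C1_0|C1_neq0] := eqVneq (C1 q s2 t1) 0.
  by right => n; rewrite /lambda C1_0 mul0r add0r.
by case: (qlaurent_not_ladder_neq1 q_gt0 q_neq1 C1_neq0 C2_neq0 Lam_neq0 ladder).
Qed.
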